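(* Assume (RHS.1), (RHS.2), (BC.1), (BC.2), and, if (RHS.2b) holds, condition (M.1). Let $u^0_{\mathfrak h}\in\mathbb V_h$ be any function with $u^0_{\mathfrak h}(z)=\tilde g_\varepsilon(z)$ for all $z\in\mathcal N_h^b$, and define $u^{n+1}_{\mathfrak h}\in\mathbb V_h$ for $n\ge0$ by $$u^{n+1}_{\mathfrak h}(z)=\tfrac12\Big[\varepsilon^2f(z)+\max_{x\in\mathcal N_{\mathfrak h}(z)}u^n_{\mathfrak h}(x)+\min_{x\in\mathcal N_{\mathfrak h}(z)}u^n_{\mathfrak h}(x)\Big]\ \ (z\in\mathcal N_h^I),\qquad u^{n+1}_{\mathfrak h}(z)=\tilde g_\varepsilon(z)\ \ (z\in\mathcal N_h^b).$$ Then the sequence $\{u^n_{\mathfrak h}\}_{n\ge0}$ converges to $u_{\mathfrak h}$, the solution of the discrete problem.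
   Context: Setting: $\Omega\subset\mathbb R^d$ ($d\ge1$) is a bounded domain with continuous boundary. For $r>0$, $\Omega^{(r)}=\{x\in\Omega:\operatorname{dist}(x,\partial\Omega)>r\}$. $\mathcal T_h$ is a mesh of closed simplices, $h=\max_T\operatorname{diam}T$, $\Omega_h$ the interior of the union of the simplices, with $\Omega^{(h)}\subset\Omega_h\subset\Omega$; $\mathcal N_h$ the set of vertices. $\mathbb V_h$: continuous piecewise linear functions on $\mathcal T_h$ (determined by nodal values), hat basis $\{\hat\varphi_z\}$, Lagrange interpolant $\mathcal I_h$. Parameters $\mathfrak h=(h,\varepsilon,\theta)$, $\varepsilon\in[h,\operatorname{diam}\Omega]$, $0<\theta\le1$. $\mathcal N_h^I=\mathcal N_h\cap\Omega^{(2\varepsilon)}$, $\mathcal N_h^b=\mathcal N_h\setminus\mathcal N_h^I$. $\mathbb S_\theta$: finite symmetric subset of the unit sphere $\mathbb S$ such that each $v\in\mathbb S$ has $v_\theta\in\mathbb S_\theta$ with $|v-v_\theta|\le\theta$. For $z\in\mathcal N_h^I$, $\mathcal N_{\mathfrak h}(z)=\{z\}\cup\{z+\varepsilon v_\theta:v_\theta\in\mathbb S_\theta\}$, $-\Delta^\diamond_{\infty,\mathfrak h}w(z)=\varepsilon^{-2}\big(2w(z)-\max_{x\in\mathcal N_{\mathfrak h}(z)}\mathcal I_hw(x)-\min_{x\in\mathcal N_{\mathfrak h}(z)}\mathcal I_hw(x)\big)$, $\widetilde{\mathcal N}_{\mathfrak h}(z)=\{z\}\cup\{z'\in\mathcal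 N_h:\exists v_\theta\in\mathbb S_\theta,\ \hat\varphi_{z'}(z+\varepsilon v_\theta)>0\}$. Assumptions: (RHS.1) $f\in C(\Omega)\cap L^\infty(\Omega)$. (RHS.2) either (RHS.2a) $\sup_\Omega f<0$ or $\inf_\Omega f>0$, or (RHS.2b) $f\equiv0$. (BC.1) $g\in C(\partial\Omega)$. (BC.2) for every $\varepsilon>0$ a function $\tilde g_\varepsilon\in C(\overline\Omega)$ approximating $g$ is given (with $\tilde g_\varepsilon\in C^{0,\alpha}(\overline\Omega)$ and $\|g-\tilde g_\varepsilon\|_{L^\infty(\partial\Omega)}\le C\varepsilon^\alpha$ whenever $g\in C^{0,\alpha}(\partial\Omega)$, $\alpha\in[0,1]$). (M.1) for every nonempty $S\subset\mathcal N_h^I$ there are $z\in S$, $z'\in\mathcal N_h\setminus S$ with $z'\in\widetilde{\mathcal N}_{\mathfrak h}(z)$. Discrete problem: find $u_{\mathfrak h}\in\mathbb V_h$ with $-\Delta^\diamond_{\infty,\mathfrak h}u_{\mathfrak h}(z)=f(z)$ for $z\in\mathcal N_h^I$ and $u_{\mathfrak h}(z)=\tilde g_\varepsilon(z)$ for $z\in\mathcal N_h^b$. *)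

From HB Require Import structures.
From mathcomp Require Import all_boot all_order all_algebra.
From mathcomp Require Import all_classical all_reals all_analysis.
Set Implicit Arguments. Unset Strict Implicit. Unset Printing Implicit Defensive.
Import Order.TTheory GRing.Theory Num.Theory.
Import numFieldNormedType.Exports.
Local Open Scope classical_set_scope.
Local Open Scope ring_scope.

(* Points of R^d with d = n.+1 >= 1 are row vectors 'rV[R]_(n.+1).
   All metric notions (norm, distance, diameter, unit sphere) are Euclidean
   and defined explicitly below (the library norm on matrices is the max norm).
   Purely topological notions (open, connected, closure, interior, continuity)
   are the library's; they do not depend on the choice of norm. *)

Section FEM.
Context {R : realType} {n : nat}.
Local Notation pt := 'rV[R]_(n.+1).

Definition enorm (x : pt) : R := Num.sqrt (\sum_(i < n.+1) x ord0 i ^+ 2).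
Definition edist (x y : pt) : R := enorm (x - y).

Definition bdry (A : set pt) : set pt := closure A `\` interior A.

Definition dist_set (x : pt) (A : set pt) : R := inf [set edist x y | y in A].

Definition inner (Om : set pt) (r : R) : set pt :=
  [set x | Om x /\ dist_set x (bdry Om) > r].

Definition ebounded (A : set pt) : Prop :=
  exists M : R, forall x, A x -> enorm x <= M.

Definition diam (A : set pt) : R := sup [set edist x y | x in A & y in A].

(* Omega has continuous boundary: near each boundary point, after a rigid motion,
   Omega is the region strictly above the graph of a continuous function of
   d-1 variables. *)
Definition continuous_boundary (Om : set pt) : Prop :=
  forall x0, bdry Om x0 ->
  exists (r : R) (Q : 'M[R]_(n.+1)) (gam : 'rV[R]_n -> R),
    [/\ 0 < r, Q *m Q^T = 1%:M, continuous gam &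
      forall x, edist x x0 < r ->
        (Om x <-> let y := (x - x0) *m Q in
                   y ord0 ord0 > gam (\row_(i < n) y ord0 (lift ord0 i)))].

Definition bounded_domain_cont_bdry (Om : set pt) : Prop :=
  [/\ open Om, Om !=set0, connected Om, ebounded Om & continuous_boundary Om].

Definition simplex := 'I_(n.+2) -> pt.

Definition barycentric (lam : 'I_(n.+2) -> R) : Prop :=
  (forall i, 0 <= lam i) /\ \sum_i lam i = 1.

Definition bary_point (T : simplex) (lam : 'I_(n.+2) -> R) : pt :=
  \sum_i lam i *: T i.

Definition aff_indep (T : simplex) : Prop :=
  forall lam : 'I_(n.+2) -> R,
    \sum_i lam i = 0 -> \sum_i lam i *: T i = 0 -> forall i, lam i = 0.

Definition closed_simplex (T : simplex) : set pt :=
  [set bary_point T lam | lam in barycentric].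

(* a mesh: finite list of non-degenerate closed simplices, conforming:
   two simplices intersect in the (possibly empty) common face spanned by
   their common vertices *)
Definition conforming_mesh (M : seq simplex) : Prop :=
  (forall T, T \in M -> aff_indep T) /\
  (forall T T', T \in M -> T' \in M ->
     closed_simplex T `&` closed_simplex T' =
     [set bary_point T lam | lam in
        [set lam | barycentric lam /\
                   forall i, lam i != 0 -> exists j, T' j = T i]]).

Definition mesh_union (M : seq simplex) : set pt :=
  [set x | exists2 T, T \in M & closed_simplex T x].

Definition Omega_h (M : seq simplex) : set pt := interior (mesh_union M).

Definition meshsize (M : seq simplex) (h : R) : Prop :=
  (forall T, T \in M -> forall i j, edist (T i) (T j) <= h) /\
  (exists2 T, T \in M & exists i j, edist (T i) (T j) = h).

Definition nodes (M : seq simplex) : set pt :=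
  [set x | exists2 T, T \in M & exists i, T i = x].

(* V_h : continuous piecewise linear functions (affine on every simplex);
   only the values on the union of the simplices are relevant *)
Definition inVh (M : seq simplex) (w : pt -> R) : Prop :=
  forall T, T \in M -> forall lam, barycentric lam ->
    w (bary_point T lam) = \sum_i lam i * w (T i).

Definition is_hat (M : seq simplex) (z : pt) (phi : pt -> R) : Prop :=
  inVh M phi /\ forall y, nodes M y -> phi y = (if y == z then 1 else 0).

Definition unit_sphere : set pt := [set v | enorm v = 1].
Definition is_Stheta (St : seq pt) (theta : R) : Prop :=
  [/\ forall v, v \in St -> enorm v = 1,
      forall v, v \in St -> - v \in St &
      forall v, unit_sphere v -> exists2 w, w \in St & enorm (v - w) <= theta].

Definition nodes_I (Om : set pt) (M : seq simplex) (eps : R) : set pt :=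
  nodes M `&` inner Om (2 * eps).
Definition nodes_b (Om : set pt) (M : seq simplex) (eps : R) : set pt :=
  nodes M `\` nodes_I Om M eps.

(* max / min of w over N_frak_h(z) = {z} U {z + eps v : v in S_theta} *)
Definition maxN (St : seq pt) (eps : R) (w : pt -> R) (z : pt) : R :=
  \big[Num.max/w z]_(v <- St) w (z + eps *: v).
Definition minN (St : seq pt) (eps : R) (w : pt -> R) (z : pt) : R :=
  \big[Num.min/w z]_(v <- St) w (z + eps *: v).

Definition disc_inf_lap (St : seq pt) (eps : R) (w : pt -> R) (z : pt) : R :=
  eps ^- 2 * (2 * w z - maxN St eps w z - minN St eps w z).

Definition solves_discrete (Om : set pt) (M : seq simplex) (St : seq pt)
  (eps : R) (f gt : pt -> R) (u : pt -> R) : Prop :=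
  [/\ inVh M u,
      forall z, nodes_I Om M eps z -> disc_inf_lap St eps u z = f z &
      forall z, nodes_b Om M eps z -> u z = gt z].

Definition in_Ntilde (M : seq simplex) (St : seq pt) (eps : R) (z z' : pt) : Prop :=
  z' = z \/ (nodes M z' /\ exists2 v, v \in St &
               forall phi, is_hat M z' phi -> phi (z + eps *: v) > 0).

Definition condM1 (Om : set pt) (M : seq simplex) (St : seq pt) (eps : R) : Prop :=
  forall S : set pt, S !=set0 -> S `<=` nodes_I Om M eps ->
    exists z z', [/\ S z, nodes M z', ~ S z' & in_Ntilde M St eps z z'].

Definition holder (alpha : R) (A : set pt) (phi : pt -> R) : Prop :=
  exists C : R, forall x y, A x -> A y -> `|phi x - phi y| <= C * (edist x y) `^ alpha.

End FEM.

From Pilot Require Import Defs.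
From HB Require Import structures.
From mathcomp Require Import all_boot all_order all_algebra.
From mathcomp Require Import all_classical all_reals all_analysis.
From mathcomp Require Import ring lra.
Import Order.TTheory GRing.Theory Num.Theory.
Import numFieldNormedType.Exports.
Local Open Scope classical_set_scope.
Local Open Scope ring_scope.
Set Implicit Arguments.
Unset Strict Implicit.
Unset Printing Implicit Defensive.

(* The update at an interior node, w |-> (eps^2 f + max + min) / 2 over the stencil, is
   monotone and commutes with adding constants.  Convexity of the interpolated paraboloid
   and the symmetry of S_theta make a + K |x|^2, with K >= sup |f|, a subsolution and its
   negative a supersolution; for a small enough they bracket u^0, so u^n is trapped between
   the iterates started from them, which are monotone, hence convergent, and whose limits
   are discrete solutions.  These limits coincide by a comparison principle: if P - Q has a
   positive maximum, take a node where it is attained and P is largest; there the equation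
   forces f >= 0, and when f = 0 it propagates the same situation to every node of a
   neighbouring stencil, which (M.1) forbids.  The case f > 0 follows by the symmetry
   u |-> -u. *)

Lemma big_seq_attained {T : Type} {I : eqType} (op : T -> T -> T) (x0 : T)
    (s : seq I) (F : I -> T) :
  (forall a b, op a b = a \/ op a b = b) ->
  \big[op/x0]_(i <- s) F i = x0 \/ exists2 i, i \in s & \big[op/x0]_(i <- s) F i = F i.
Proof.
move=> op_sel; elim: s => [|j s IH]; first by left; rewrite big_nil.
rewrite big_cons; have [->|->] := op_sel (F j) (\big[op/x0]_(i <- s) F i).
  by right; exists j; rewrite ?mem_head.
case: IH => [->|[i i_s ->]]; first by left.
by right; exists i; rewrite // in_cons i_s orbT.
Qed.

Lemma cvg_big_seq_base {T : topologicalType} {I : eqType} (op : T -> T -> T)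
    (s : seq I) (a : nat -> T) (F : I -> nat -> T) (la : T) (lF : I -> T) :
  continuous (fun xy : T * T => op xy.1 xy.2) ->
  a k @[k --> \oo] --> la -> (forall i, i \in s -> F i k @[k --> \oo] --> lF i) ->
  \big[op/a k]_(i <- s) F i k @[k --> \oo] --> \big[op/la]_(i <- s) lF i.
Proof.
move=> op_cont cvg_a; elim: s => [|j s IH] cvg_F.
  by rewrite big_nil; under eq_cvg do rewrite big_nil.
rewrite big_cons; under eq_cvg do rewrite big_cons.
apply: (@continuous2_cvg _ _ _ _ _ _ _ _ op); first exact: (op_cont (_, _)).
  by apply: cvg_F; rewrite mem_head.
by apply: IH => i i_s; apply: cvg_F; rewrite in_cons i_s orbT.
Qed.

Lemma max_sel {d} {T : orderType d} (a b : T) : Order.max a b = a \/ Order.max a b = b.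
Proof. by case: (leP a b) => _; [right | left]. Qed.

Lemma min_sel {d} {T : orderType d} (a b : T) : Order.min a b = a \/ Order.min a b = b.
Proof. by case: (leP a b) => _; [left | right]. Qed.

Lemma exists_seq_argmax {R : realType} {T : eqType} (s : seq T) (E : T -> Prop)
    (F : T -> R) y0 : y0 \in s -> E y0 ->
  exists z, [/\ z \in s, E z & forall y, y \in s -> E y -> F y <= F z].
Proof.
move=> y0s Ey0; pose s' := [seq y <- s | `[< E y >]].
have s'P y : reflect (y \in s /\ E y) (y \in s').
  by rewrite mem_filter andbC; apply: (iffP andP) => -[? /asboolP].
have [z [z_s' mx_z]] : exists z, z \in s' /\ \big[Num.max/F y0]_(y <- s') F y = F z.
  case: (big_seq_attained (F y0) s' F max_sel) => [->|[z ? ->]]; last by exists z.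
  by exists y0; split => //; apply/s'P.
have [zs Ez] := s'P z z_s'; exists z; split => // y ys Ey; rewrite -mx_z.
by apply: (le_bigmax_seq _ y xpredT) => //; apply/s'P.
Qed.

Lemma path_in_open {R : realType} {T : topologicalType} (A : set T) (p : R -> T) :
  open A -> continuous p -> A (p 0) ->
  (forall t, 0 <= t <= 1 -> closure A (p t) -> A (p t)) -> A (p 1).
Proof.
move=> oA cp A0 clA.
have inI t : `[(0:R), 1]%classic t <-> 0 <= t <= 1 by rewrite /= in_itv.
suff I_eq : `[(0:R), 1]%classic `&` (p @^-1` A) = `[0, 1]%classic.
  have [] // : (`[(0:R), 1]%classic `&` (p @^-1` A)) 1.
  by rewrite I_eq; apply/inI; rewrite ler01 lexx.
apply: segment_connected.
- by exists 0; split => //; apply/inI; rewrite lexx ler01.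
- by exists (p @^-1` A) => //; apply: open_comp => // t _; exact: cp.
- exists (p @^-1` closure A).
    by apply: preimage_closed => [t _|]; [exact: cp | exact: closed_closure].
  apply/seteqP; split => t [It At]; split => //=; first exact: subset_closure.
  exact: clA (proj1 (inI t) It) At.
Qed.

Section Euclidean.
Context {R : realType} {n : nat}.
Local Notation pt := 'rV[R]_(n.+1).
Implicit Types (x y z v : pt) (c : R).

Definition sqnorm x : R := \sum_(i < n.+1) x ord0 i ^+ 2.
Definition dotp x y : R := \sum_(i < n.+1) x ord0 i * y ord0 i.

Lemma sqnorm_ge0 x : 0 <= sqnorm x.
Proof. by apply: sumr_ge0 => i _; rewrite sqr_ge0. Qed.

Lemma enorm_ge0 x : 0 <= enorm x.
Proof. exact: sqrtr_ge0. Qed.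

Lemma sqr_enorm x : enorm x ^+ 2 = sqnorm x.
Proof. by rewrite sqr_sqrtr // sqnorm_ge0. Qed.

Lemma sqnormZ c x : sqnorm (c *: x) = c ^+ 2 * sqnorm x.
Proof. by rewrite /sqnorm mulr_sumr; apply: eq_bigr => i _; rewrite mxE exprMn. Qed.

Lemma sqnormN x : sqnorm (- x) = sqnorm x.
Proof. by apply: eq_bigr => i _; rewrite mxE sqrrN. Qed.

Lemma sqnormD x y : sqnorm (x + y) = sqnorm x + 2 * dotp x y + sqnorm y.
Proof.
rewrite /sqnorm /dotp mulr_sumr -!big_split /=.
by apply: eq_bigr => i _; rewrite mxE; ring.
Qed.

Lemma dotpZr c x y : dotp x (c *: y) = c * dotp x y.
Proof. by rewrite /dotp mulr_sumr; apply: eq_bigr => i _; rewrite mxE; ring. Qed.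

Lemma dotpNr x y : dotp x (- y) = - dotp x y.
Proof. by rewrite -scaleN1r dotpZr mulN1r. Qed.

Lemma enormZ c x : enorm (c *: x) = `|c| * enorm x.
Proof. by rewrite /enorm -/(sqnorm _) sqnormZ sqrtrM ?sqr_ge0 // sqrtr_sqr. Qed.

Lemma enormN x : enorm (- x) = enorm x.
Proof. by rewrite -scaleN1r enormZ normrN normr1 mul1r. Qed.

Lemma sqnorm_eq0 x : sqnorm x = 0 -> x = 0.
Proof.
move=> sq0; apply/rowP => i; rewrite mxE; apply/eqP; rewrite -sqrf_eq0; apply/eqP.
exact: (@psumr_eq0P _ _ xpredT _ (fun i _ => sqr_ge0 (x ord0 i)) sq0 i isT).
Qed.

Lemma enorm_eq0 x : enorm x = 0 -> x = 0.
Proof.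
move=> /eqP; rewrite sqrtr_eq0 => sq_le0; apply: sqnorm_eq0.
by apply/eqP; rewrite eq_le sq_le0 sqnorm_ge0.
Qed.

Lemma dotp_sqr_le x y : dotp x y ^+ 2 <= sqnorm x * sqnorm y.
Proof.
have [/sqnorm_eq0 ->|ynz] := eqVneq (sqnorm y) 0.
  rewrite /dotp big1 => [|i _]; last by rewrite mxE mulr0.
  by rewrite expr2 mulr0 mulr_ge0 ?sqnorm_ge0.
have yp : 0 < sqnorm y by rewrite lt0r ynz sqnorm_ge0.
(* expand [0 <= sqnorm (x - t y)] at the minimising [t = dotp x y / sqnorm y] *)
pose t := dotp x y / sqnorm y.
have := sqnorm_ge0 (x + (- t) *: y).
rewrite sqnormD dotpZr sqnormZ -(ler_pM2r yp) mul0r.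
have -> : (sqnorm x + 2 * (- t * dotp x y) + (- t) ^+ 2 * sqnorm y) * sqnorm y
    = sqnorm x * sqnorm y - dotp x y ^+ 2 by rewrite /t; field; rewrite ynz.
by rewrite subr_ge0.
Qed.

Lemma ler_enormD x y : enorm (x + y) <= enorm x + enorm y.
Proof.
rewrite -(@ler_pXn2r _ 2) ?nnegrE ?addr_ge0 ?enorm_ge0 //.
rewrite sqr_enorm sqrrD !sqr_enorm sqnormD lerD2r lerD2l mulr_natl ler_pMn2r //.
rewrite (le_trans (ler_norm _)) // -(@ler_pXn2r _ 2) ?nnegrE ?mulr_ge0 ?enorm_ge0 //.
by rewrite real_normK ?num_real // exprMn !sqr_enorm dotp_sqr_le.
Qed.

Lemma ler_edistD x y z : Defs.edist x z <= Defs.edist x y + Defs.edist y z.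
Proof. by rewrite /Defs.edist (_ : x - z = (x - y) + (y - z)) ?ler_enormD // addrA subrK. Qed.

End Euclidean.

Section Geometry.
Context {R : realType} {n : nat}.
Local Notation pt := 'rV[R]_(n.+1).

Lemma dist_set_le (A : set pt) z b : A b -> dist_set z A <= Defs.edist z b.
Proof.
move=> Ab; apply: ge_inf; last by exists b.
by exists 0 => _ [y _ <-]; exact: enorm_ge0.
Qed.

Lemma dist_set_lipschitz (A : set pt) z y : A !=set0 ->
  dist_set z A - Defs.edist z y <= dist_set y A.
Proof.
move=> [b Ab]; apply: lb_le_inf; first by exists (Defs.edist y b), b.
move=> _ [c Ac <-]; have := dist_set_le z Ac; have := ler_edistD z y c; lra.
Qed.

Lemma stencil_in_mesh (Om : set pt) (M : seq (@simplex R n)) (h eps : R) z v :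
  open Om -> inner Om h `<=` Omega_h M -> 0 <= h -> h <= eps ->
  inner Om (2 * eps) z -> enorm v = 1 -> mesh_union M (z + eps *: v).
Proof.
move=> oOm sub h0 heps [Omz dz] v1.
have eps0 : 0 <= eps by apply: le_trans heps.
pose p t := z + (t * eps) *: v.
have dist_p t : 0 <= t -> Defs.edist z (p t) = t * eps.
  move=> t0; rewrite /Defs.edist /p opprD addNKr enormN enormZ v1 mulr1.
  by rewrite ger0_norm // mulr_ge0.
have p1 : p 1 = z + eps *: v by rewrite /p mul1r.
have bdry0 : bdry Om !=set0.
  apply/set0P/negP => /eqP B0; move: dz; rewrite B0 /dist_set image_set0 inf0; lra.
have Om_p1 : Om (p 1).
  apply: path_in_open => //.
  - move=> t; apply: cvgD; first exact: cvg_cst.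
    by apply: cvgZ; [apply: cvgM; [exact: cvg_id | exact: cvg_cst] | exact: cvg_cst].
  - by rewrite /p mul0r scale0r addr0.
  move=> t /andP[t0 t1] clt; apply: contrapT => nOm.
  have bt : bdry Om (p t) by split => //; rewrite (interior_id _).1.
  have := lt_le_trans dz (dist_set_le z bt); rewrite dist_p //.
  have : t * eps <= eps by rewrite ler_piMl.
  lra.
rewrite -p1; apply: interior_subset; apply: sub; split => //.
have := @dist_set_lipschitz _ z (p 1) bdry0; rewrite dist_p ?ler01 // mul1r; lra.
Qed.

End Geometry.

Section Barycentric.
Context {R : realType} {n : nat}.
Local Notation pt := 'rV[R]_(n.+1).
Implicit Types (T : @simplex R n) (lam mu : 'I_n.+2 -> R).

Definition vertex_coords (a : 'I_n.+2) : 'I_n.+2 -> R := fun i => (i == a)%:R.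

Lemma sum_vertex_coords (F : 'I_n.+2 -> R) a : \sum_i vertex_coords a i * F i = F a.
Proof.
by rewrite (bigD1 a) //= /vertex_coords eqxx mul1r big1 ?addr0 // => i /negbTE ->; rewrite mul0r.
Qed.

Lemma vertex_coords_bary a : barycentric (vertex_coords a).
Proof.
split=> [i|]; first exact: ler0n.
by rewrite -(sum_vertex_coords (fun=> 1) a); apply: eq_bigr => i _; rewrite mulr1.
Qed.

Lemma bary_point_vertex T a : bary_point T (vertex_coords a) = T a.
Proof.
rewrite /bary_point (bigD1 a) //= /vertex_coords eqxx scale1r big1 ?addr0 //.
by move=> i /negbTE ->; rewrite scale0r.
Qed.

Lemma bary_pointE T lam k : bary_point T lam ord0 k = \sum_i lam i * T i ord0 k.
Proof. by rewrite /bary_point summxE; apply: eq_bigr => i _; rewrite mxE. Qed.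

Lemma aff_indep_coords T lam mu : aff_indep T ->
  \sum_i lam i = \sum_i mu i -> bary_point T lam = bary_point T mu -> lam =1 mu.
Proof.
move=> aT s_eq p_eq i; apply/eqP; rewrite -subr_eq0; apply/eqP.
apply: (aT (fun i => lam i - mu i)); first by rewrite sumrB s_eq subrr.
under eq_bigr do rewrite scalerBl.
by rewrite sumrB -/(bary_point T lam) -/(bary_point T mu) p_eq subrr.
Qed.

Lemma aff_indep_inj T : aff_indep T -> injective T.
Proof.
move=> aT a b Tab; have := @aff_indep_coords T (vertex_coords a) (vertex_coords b) aT.
rewrite !bary_point_vertex (vertex_coords_bary a).2 (vertex_coords_bary b).2.
move=> /(_ erefl Tab a); rewrite /vertex_coords eqxx.
by case: (a =P b) => // _ /eqP; rewrite eqr_nat.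
Qed.

Lemma bary_avg_le lam (a : 'I_n.+2 -> R) c : barycentric lam ->
  (forall i, 0 < lam i -> a i <= c) -> \sum_i lam i * a i <= c.
Proof.
move=> [lam0 lam1] le_c; rewrite -[leRHS]mul1r -lam1 mulr_suml; apply: ler_sum => i _.
have := lam0 i; rewrite le0r => /orP[/eqP->|lam_i]; first by rewrite !mul0r.
by rewrite ler_pM2l // le_c.
Qed.

Lemma bary_avg_eq lam (a : 'I_n.+2 -> R) c : barycentric lam ->
  (forall i, 0 < lam i -> a i <= c) -> c <= \sum_i lam i * a i ->
  forall i, 0 < lam i -> a i = c.
Proof.
move=> [lam0 lam1] le_c avg_c i lam_i; apply/eqP; rewrite eq_le le_c //=.
apply: contraTT avg_c; rewrite -!ltNge => lt_ai.
rewrite -[ltRHS]mul1r -lam1 mulr_suml (bigD1 i) //= [ltRHS](bigD1 i) //=.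
apply: ltr_leD; first by rewrite ltr_pM2l.
apply: ler_sum => j _; have := lam0 j; rewrite le0r => /orP[/eqP->|lam_j].
  by rewrite !mul0r.
by rewrite ler_pM2l // le_c.
Qed.

Lemma sqr_bary_le lam (a : 'I_n.+2 -> R) : barycentric lam ->
  (\sum_i lam i * a i) ^+ 2 <= \sum_i lam i * a i ^+ 2.
Proof.
move=> [lam0 lam1]; set m := \sum_i lam i * a i.
have : 0 <= \sum_i lam i * (a i - m) ^+ 2.
  by apply: sumr_ge0 => i _; rewrite mulr_ge0 ?sqr_ge0.
have -> : \sum_i lam i * (a i - m) ^+ 2 =
    \sum_i lam i * a i ^+ 2 - 2 * m * m + m ^+ 2 * \sum_i lam i.
  transitivity (\sum_i (lam i * a i ^+ 2 - 2 * m * (lam i * a i) + m ^+ 2 * lam i)).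
    by apply: eq_bigr => i _; ring.
  by rewrite big_split /= sumrB -!mulr_sumr.
rewrite lam1 -/m; lra.
Qed.

Lemma sqnorm_bary_le T lam : barycentric lam ->
  sqnorm (bary_point T lam) <= \sum_i lam i * sqnorm (T i).
Proof.
move=> bl; rewrite /sqnorm.
under eq_bigr do rewrite bary_pointE.
under [leRHS]eq_bigr do rewrite mulr_sumr.
by rewrite [leRHS]exchange_big /=; apply: ler_sum => k _; exact: sqr_bary_le.
Qed.

End Barycentric.

Section Interpolation.
Context {R : realType} {n : nat}.
Local Notation pt := 'rV[R]_(n.+1).
Local Notation smp := (@simplex R n).
Variable M : seq smp.
Hypothesis cM : conforming_mesh M.
Implicit Types (T : smp) (lam : 'I_n.+2 -> R) (w : pt -> R).

Lemma conforming_support T T' lam lam' : T \in M -> T' \in M ->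
  barycentric lam -> barycentric lam' -> bary_point T lam = bary_point T' lam' ->
  forall i, lam i != 0 -> exists j, T' j = T i.
Proof.
move=> TM T'M bl bl' E.
have [mu [[_ mu1] mu_supp] E_mu] :
    [set bary_point T mu | mu in [set mu | barycentric mu /\
       forall i, mu i != 0 -> exists j, T' j = T i]] (bary_point T lam).
  by rewrite -(cM.2 T T' TM T'M); split; [exists lam | rewrite E; exists lam'].
have := aff_indep_coords (cM.1 T TM) (etrans bl.2 (esym mu1)) (esym E_mu).
by move=> lam_mu i; rewrite lam_mu; exact: mu_supp.
Qed.

Definition transfer_coords T T' lam : 'I_n.+2 -> R :=
  fun j => \sum_i lam i * (T i == T' j)%:R.

Lemma transfer_coordsE T T' lam (F : pt -> R) : aff_indep T' ->
  (forall i, lam i != 0 -> exists j, T' j = T i) ->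
  \sum_j transfer_coords T T' lam j * F (T' j) = \sum_i lam i * F (T i).
Proof.
move=> aT' supp; rewrite /transfer_coords; under eq_bigr do rewrite mulr_suml.
rewrite exchange_big /=; apply: eq_bigr => i _.
have [->|/supp [j0 Tj0]] := eqVneq (lam i) 0.
  by rewrite big1 ?mul0r // => j _; rewrite !mul0r.
rewrite (bigD1 j0) //= Tj0 eqxx mulr1 big1 ?addr0 // => j nj.
suff /negbTE -> : T i != T' j by rewrite mulr0 mul0r.
by rewrite -Tj0; apply: contra nj => /eqP /(aff_indep_inj aT') ->.
Qed.

(* conformity makes the piecewise affine extension of nodal values well defined *)
Lemma conforming_bary_sum T T' lam lam' (F : pt -> R) : T \in M -> T' \in M ->
  barycentric lam -> barycentric lam' -> bary_point T lam = bary_point T' lam' ->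
  \sum_i lam i * F (T i) = \sum_j lam' j * F (T' j).
Proof.
move=> TM T'M bl bl' E.
have aT' := cM.1 T' T'M; have supp := conforming_support TM T'M bl bl' E.
have nu_lam' : transfer_coords T T' lam =1 lam'.
  apply: (aff_indep_coords aT').
    have := transfer_coordsE (fun=> 1) aT' supp.
    under eq_bigr do rewrite mulr1; under [in X in _ = X -> _]eq_bigr do rewrite mulr1.
    by move=> ->; rewrite bl.2 bl'.2.
  rewrite -E; apply/rowP => k; rewrite !bary_pointE.
  exact: (transfer_coordsE (fun p => p ord0 k) aT' supp).
by rewrite -(transfer_coordsE F aT' supp); apply: eq_bigr => j _; rewrite nu_lam'.
Qed.

(* outside the mesh [locate] returns a junk cell with zero weights *)
Definition locate x : smp * ('I_n.+2 -> R) :=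
  match pselect (exists TL : smp * ('I_n.+2 -> R),
     [/\ TL.1 \in M, barycentric TL.2 & bary_point TL.1 TL.2 = x]) with
  | left H => proj1_sig (cid H)
  | right _ => (fun _ => x, fun _ => 0)
  end.

(* the paper's [I_h w]: the element of V_h with the nodal values of [w] *)
Definition interp w x : R := \sum_i (locate x).2 i * w ((locate x).1 i).

Definition node_seq : seq pt := [seq T i | T <- M, i <- enum 'I_n.+2].

Lemma node_seqP x : reflect (nodes M x) (x \in node_seq).
Proof.
apply: (iffP allpairsP) => [[[T i] [TM _ ->]]|[T TM [i <-]]]; first by exists T => //; exists i.
by exists (T, i); rewrite mem_enum.
Qed.

Lemma locateP x : mesh_union M x ->
  [/\ (locate x).1 \in M, barycentric (locate x).2 & bary_point (locate x).1 (locate x).2 = x].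
Proof.
move=> [T TM [lam bl E]]; rewrite /locate; case: pselect => [H|[]].
  exact: (proj2_sig (cid H)).
by exists (T, lam).
Qed.

Lemma locate_node x i : mesh_union M x -> nodes M ((locate x).1 i).
Proof. by case/locateP => TM _ _; exists (locate x).1 => //; exists i. Qed.

Lemma nodes_mesh_union y : nodes M y -> mesh_union M y.
Proof.
move=> [T TM [a <-]]; exists T => //; exists (vertex_coords a).
  exact: vertex_coords_bary.
exact: bary_point_vertex.
Qed.

Lemma interp_Vh w x : inVh M w -> mesh_union M x -> interp w x = w x.
Proof. by move=> wV /locateP [TM bl E]; rewrite /interp -(wV _ TM _ bl) E. Qed.

Lemma interp_node w y : nodes M y -> interp w y = w y.
Proof.
move=> Ny; have [TM' bl' E'] := locateP (nodes_mesh_union Ny); have [T TM [a Ta]] := Ny.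
rewrite /interp (conforming_bary_sum w TM' TM bl' (vertex_coords_bary a)).
  by rewrite sum_vertex_coords Ta.
by rewrite E' bary_point_vertex Ta.
Qed.

Lemma interp_inVh w : inVh M (interp w).
Proof.
move=> T TM lam bl.
have mx : mesh_union M (bary_point T lam) by exists T => //; exists lam.
have [TM' bl' E'] := locateP mx.
rewrite {1}/interp (conforming_bary_sum w TM' TM bl' bl E').
by apply: eq_bigr => i _; rewrite interp_node //; exists T => //; exists i.
Qed.

Lemma interp_ext w w' x : mesh_union M x -> {in nodes M, w =1 w'} ->
  interp w x = interp w' x.
Proof. by move=> mx ww'; apply: eq_bigr => i _; rewrite ww' // inE; apply: locate_node. Qed.

Lemma interpN w x : interp (fun y => - w y) x = - interp w x.
Proof. by rewrite /interp -sumrN; apply: eq_bigr => i _; rewrite mulrN. Qed.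

Lemma interpB w w' x : interp w x - interp w' x =
  \sum_i (locate x).2 i * (w ((locate x).1 i) - w' ((locate x).1 i)).
Proof. by rewrite /interp -sumrB; apply: eq_bigr => i _; rewrite mulrBr. Qed.

Lemma interp_leD w w' c x : mesh_union M x ->
  (forall y, nodes M y -> w y <= w' y + c) -> interp w x <= interp w' x + c.
Proof.
move=> mx le_ww'; have [_ bl _] := locateP mx.
rewrite addrC -lerBlDr interpB; apply: bary_avg_le => // i _.
by rewrite lerBlDr addrC le_ww' //; apply: locate_node.
Qed.

Lemma interp_hat_gt0 z' x : mesh_union M x ->
  (forall phi, is_hat M z' phi -> phi x > 0) ->
  exists i, 0 < (locate x).2 i /\ (locate x).1 i = z'.
Proof.
move=> mx hat_gt0; have [_ [lam0 _] _] := locateP mx.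
have hat : is_hat M z' (interp (fun y => (y == z')%:R)).
  split; first exact: interp_inVh.
  by move=> y Ny; rewrite interp_node //; case: (y == z').
have := hat_gt0 _ hat; apply: contraPP => no_vertex; apply/negP; rewrite -leNgt.
apply: sumr_le0 => i _; have [e|ne] := eqVneq ((locate x).1 i) z'; last first.
  by rewrite /= mulr0.
rewrite /= mulr1; have := lam0 i; rewrite le0r => /orP[/eqP ->//|lam_i].
by case: no_vertex; exists i.
Qed.

Lemma interp_sqnorm_ge (a K : R) x : 0 <= K -> mesh_union M x ->
  a + K * sqnorm x <= interp (fun y => a + K * sqnorm y) x.
Proof.
move=> K0 mx; have [_ bl E] := locateP mx.
have -> : interp (fun y => a + K * sqnorm y) x =
    a + K * \sum_i (locate x).2 i * sqnorm ((locate x).1 i).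
  rewrite /interp mulr_sumr -[a in RHS]mul1r -bl.2 mulr_suml -big_split /=.
  by apply: eq_bigr => i _; ring.
by rewrite lerD2l ler_wpM2l // -{1}E sqnorm_bary_le.
Qed.

Lemma cvg_interp (s : nat -> pt -> R) L x : mesh_union M x ->
  (forall y, nodes M y -> s k y @[k --> \oo] --> L y) ->
  interp (s k) x @[k --> \oo] --> interp L x.
Proof.
move=> mx cvg_s; apply: (@cvg_big _ _ +%R 0 predT add_continuous) => // i _.
by apply: cvgM; [exact: cvg_cst | apply: cvg_s; apply: locate_node].
Qed.

End Interpolation.

Section Scheme.
Context {R : realType} {n : nat}.
Local Notation pt := 'rV[R]_(n.+1).
Variables (M : seq (@simplex R n)) (St : seq pt) (eps : R) (I : set pt).
Hypothesis cM : conforming_mesh M.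
Hypothesis I_nodes : I `<=` nodes M.
Hypothesis stencil_mesh : forall z v, I z -> v \in St -> mesh_union M (z + eps *: v).
Hypothesis eps_neq0 : eps != 0.
Implicit Types (f g w : pt -> R) (z : pt).

Definition stencil_max w z := \big[Num.max/w z]_(v <- St) interp M w (z + eps *: v).
Definition stencil_min w z := \big[Num.min/w z]_(v <- St) interp M w (z + eps *: v).

Definition step f w z := 2^-1 * (eps ^+ 2 * f z + stencil_max w z + stencil_min w z).

Lemma le_stencil_max w z v : v \in St -> interp M w (z + eps *: v) <= stencil_max w z.
Proof. by move=> vS; apply: (le_bigmax_seq _ v xpredT). Qed.

Lemma stencil_min_le w z v : v \in St -> stencil_min w z <= interp M w (z + eps *: v).
Proof. by move=> vS; apply: (ge_bigmin_seq _ v xpredT). Qed.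

Lemma le_stencil_max_id w z : w z <= stencil_max w z.
Proof. exact: bigmax_ge_id. Qed.

Lemma stencil_min_le_id w z : stencil_min w z <= w z.
Proof. exact: bigmin_le_id. Qed.

Lemma stencil_max_leD w w' c z : I z -> (forall y, nodes M y -> w y <= w' y + c) ->
  stencil_max w z <= stencil_max w' z + c.
Proof.
move=> Iz le_ww'; rewrite {1}/stencil_max big_seq; apply: bigmax_le => [|v vS].
  by rewrite (le_trans (le_ww' _ (I_nodes Iz))) // lerD2r le_stencil_max_id.
by rewrite (le_trans (interp_leD (stencil_mesh Iz vS) le_ww')) // lerD2r le_stencil_max.
Qed.

Lemma stencil_min_leD w w' c z : I z -> (forall y, nodes M y -> w y <= w' y + c) ->
  stencil_min w z <= stencil_min w' z + c.
Proof.
move=> Iz le_ww'; rewrite /stencil_min.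
case: (big_seq_attained (w' z) St (fun v => interp M w' (z + eps *: v)) min_sel).
  by move=> ->; rewrite (le_trans _ (le_ww' _ (I_nodes Iz))) // stencil_min_le_id.
move=> [v vS ->]; rewrite (le_trans _ (interp_leD (stencil_mesh Iz vS) le_ww')) //.
exact: stencil_min_le.
Qed.

Lemma stencil_maxN w z : stencil_max (fun y => - w y) z = - stencil_min w z.
Proof.
rewrite /stencil_max /stencil_min (big_morph _ (@oppr_min R) erefl).
by apply: eq_bigr => v _; rewrite interpN.
Qed.

Lemma stencil_minN w z : stencil_min (fun y => - w y) z = - stencil_max w z.
Proof.
rewrite /stencil_max /stencil_min (big_morph _ (@oppr_max R) erefl).
by apply: eq_bigr => v _; rewrite interpN.
Qed.

Lemma stepN f w z : step (fun y => - f y) (fun y => - w y) z = - step f w z.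
Proof. by rewrite /step stencil_maxN stencil_minN; ring. Qed.

Lemma step_leD f w w' c z : I z -> (forall y, nodes M y -> w y <= w' y + c) ->
  step f w z <= step f w' z + c.
Proof.
move=> Iz le_ww'; have := stencil_max_leD Iz le_ww'; have := stencil_min_leD Iz le_ww'.
rewrite /step; lra.
Qed.

Lemma step_le f w w' z : I z -> (forall y, nodes M y -> w y <= w' y) ->
  step f w z <= step f w' z.
Proof.
by move=> Iz le_ww'; rewrite -[leRHS]addr0; apply: step_leD => // y /le_ww'; rewrite addr0.
Qed.

Lemma step_ext f w w' z : I z -> {in nodes M, w =1 w'} -> step f w z = step f w' z.
Proof.
by move=> Iz ww'; apply/eqP; rewrite eq_le !step_le // => y Ny; rewrite ww' // inE.
Qed.

Lemma cvg_step f (s : nat -> pt -> R) L z : I z ->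
  (forall y, nodes M y -> s k y @[k --> \oo] --> L y) ->
  step f (s k) z @[k --> \oo] --> step f L z.
Proof.
move=> Iz cvg_s; apply: cvgM; first exact: cvg_cst.
apply: cvgD; first (apply: cvgD; first exact: cvg_cst).
- apply: cvg_big_seq_base; [exact: max_continuous | exact: cvg_s (I_nodes Iz) |].
  by move=> v vS; apply: cvg_interp => //; exact: stencil_mesh.
- apply: cvg_big_seq_base; [exact: min_continuous | exact: cvg_s (I_nodes Iz) |].
  by move=> v vS; apply: cvg_interp => //; exact: stencil_mesh.
Qed.

Definition condM1_on : Prop := forall S : set pt, S !=set0 -> S `<=` I ->
  exists z z', [/\ S z, nodes M z', ~ S z' & in_Ntilde M St eps z z'].

Section Comparison.
Variables (f P Q : pt -> R).
Hypothesis PQ_off : forall x, nodes M x -> ~ I x -> P x = Q x.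
Hypothesis P_fix : forall z, I z -> P z = step f P z.
Hypothesis Q_fix : forall z, I z -> Q z = step f Q z.

Section Contact.
Variable m : R.
Hypothesis m_gt0 : 0 < m.
Hypothesis PQ_le : forall y, nodes M y -> P y <= Q y + m.

Definition contact y := nodes M y /\ P y = Q y + m.
Definition top_contact z := contact z /\ forall y, contact y -> P y <= P z.

Lemma contact_I y : contact y -> I y.
Proof.
move=> [Ny Py]; apply: contrapT => nIy; move: Py; rewrite PQ_off //.
by move/eqP; rewrite -subr_eq0 opprD addNKr oppr_eq0 gt_eqF.
Qed.

Lemma contact_stencil z : contact z ->
  stencil_max P z = stencil_max Q z + m /\ stencil_min P z = stencil_min Q z + m.
Proof.
move=> cz; have Iz := contact_I cz; have [_ Pz] := cz.
have := stencil_max_leD Iz PQ_le.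
have := stencil_min_leD Iz PQ_le.
have := P_fix Iz; have := Q_fix Iz; rewrite /step; lra.
Qed.

Lemma contact_spread y : mesh_union M y -> interp M P y = interp M Q y + m ->
  forall i, 0 < (locate M y).2 i -> contact ((locate M y).1 i).
Proof.
move=> my eq_y i lam_i; have [_ bl _] := locateP my; split; first exact: locate_node.
have D_le j : 0 < (locate M y).2 j -> P ((locate M y).1 j) - Q ((locate M y).1 j) <= m.
  by move=> _; rewrite lerBlDr addrC PQ_le //; apply: locate_node.
have := bary_avg_eq bl D_le _ lam_i; rewrite -interpB eq_y addrC addKr lexx.
by move=> /(_ isT) /eqP; rewrite subr_eq addrC => /eqP.
Qed.

Lemma top_contact_stencil_max z : top_contact z -> stencil_max P z = P z.
Proof.
move=> [cz z_top]; have Iz := contact_I cz; have [smax_eq _] := contact_stencil cz.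
have [//|[v vS smax_v]] :=
  big_seq_attained (P z) St (fun v => interp M P (z + eps *: v)) max_sel.
have smax_y : stencil_max P z = interp M P (z + eps *: v) := smax_v.
have my := stencil_mesh Iz vS; have [_ bl _] := locateP my.
have eq_y : interp M P (z + eps *: v) = interp M Q (z + eps *: v) + m.
  have := interp_leD my PQ_le; have := le_stencil_max Q z vS; lra.
apply/eqP; rewrite eq_le le_stencil_max_id andbT smax_y.
by apply: bary_avg_le => // i lam_i; apply: z_top; exact: contact_spread.
Qed.

Lemma top_contact_rhs_ge0 z : top_contact z -> 0 <= eps ^+ 2 * f z.
Proof.
move=> tz; have Iz := contact_I tz.1; have := P_fix Iz.
have := top_contact_stencil_max tz; have := stencil_min_le_id P z; rewrite /step; lra.
Qed.

Lemma top_contact_neighbour z v : f z = 0 -> top_contact z -> v \in St ->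
  forall i, 0 < (locate M (z + eps *: v)).2 i -> top_contact ((locate M (z + eps *: v)).1 i).
Proof.
move=> fz0 tz vS i lam_i; have [cz z_top] := tz; have Iz := contact_I cz.
have my := stencil_mesh Iz vS; have [_ bl _] := locateP my.
have [smax_eq smin_eq] := contact_stencil cz; have smax_P := top_contact_stencil_max tz.
have := P_fix Iz; have := Q_fix Iz; rewrite /step fz0 mulr0 add0r => Qz Pz.
have eq_P : interp M P (z + eps *: v) = P z.
  have := le_stencil_max P z vS; have := stencil_min_le P z vS; lra.
have eq_Q : interp M P (z + eps *: v) = interp M Q (z + eps *: v) + m.
  have := le_stencil_max Q z vS; have := stencil_min_le Q z vS; have := cz.2; lra.
have cy := contact_spread my eq_Q.
split; first exact: cy.
have P_le j : 0 < (locate M (z + eps *: v)).2 j -> P ((locate M (z + eps *: v)).1 j) <= P z.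
  by move=> lam_j; apply: z_top; exact: cy.
by move=> y c_y; rewrite (bary_avg_eq bl P_le _ lam_i) ?z_top // -eq_P.
Qed.

End Contact.

Lemma comparison_nonpos :
  (forall z, I z -> f z < 0) \/ ((forall z, I z -> f z = 0) /\ condM1_on) ->
  forall x, nodes M x -> P x <= Q x.
Proof.
move=> rhs x Nx; rewrite leNgt; apply/negP => Qx_lt.
have [y0 [y0_nodes _ y0_max]] :=
  exists_seq_argmax (fun y => P y - Q y) (introT (node_seqP M x) Nx) (Logic.I : True).
set m := P y0 - Q y0 in y0_max.
have PQ_le y : nodes M y -> P y <= Q y + m.
  by move=> /node_seqP Ny; rewrite -lerBlDl y0_max.
have m_gt0 : 0 < m.
  by rewrite (lt_le_trans _ (y0_max x _ Logic.I)) ?subr_gt0 //; apply/node_seqP.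
have cy0 : contact m y0 by split; [apply/node_seqP | rewrite addrC subrK].
have [z0 [_ cz0 z0_top]] := exists_seq_argmax P y0_nodes cy0.
have tz0 : top_contact m z0.
  by split => // y cy; apply: z0_top => //; apply/node_seqP; case: cy.
have top_I y : top_contact m y -> I y by case=> /(contact_I m_gt0).
case: rhs => [f_lt0|[f0 M1]].
  have := top_contact_rhs_ge0 m_gt0 PQ_le tz0.
  by rewrite leNgt pmulr_rlt0 ?f_lt0 ?exprn_even_gt0 //; apply: top_I.
have [z [z' [tz _ ntz' [z'z|[_ [v vS hat_v]]]]]] := M1 (top_contact m) (ex_intro _ z0 tz0) top_I.
  by apply: ntz'; rewrite z'z.
have [i [lam_i vertex_i]] := interp_hat_gt0 cM (stencil_mesh (top_I _ tz) vS) hat_v.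
by apply: ntz'; rewrite -vertex_i; apply: top_contact_neighbour => //; apply: f0; apply: top_I.
Qed.

End Comparison.

Definition rhs_sign (f : pt -> R) : Prop :=
  [\/ forall z, I z -> f z < 0, forall z, I z -> 0 < f z |
      (forall z, I z -> f z = 0) /\ condM1_on].

Definition nodal_solution (f g L : pt -> R) : Prop :=
  (forall z, I z -> L z = step f L z) /\ (forall x, nodes M x -> ~ I x -> L x = g x).

Lemma nodal_solution_le f g P Q : rhs_sign f ->
  nodal_solution f g P -> nodal_solution f g Q -> forall x, nodes M x -> P x <= Q x.
Proof.
move=> rhs [P_fix P_off] [Q_fix Q_off].
have PQ_off x : nodes M x -> ~ I x -> P x = Q x by move=> Nx nIx; rewrite P_off ?Q_off.
case: rhs => [f_lt0|f_gt0|f0M1].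
- exact: (comparison_nonpos PQ_off P_fix Q_fix (or_introl f_lt0)).
- move=> x Nx; rewrite -lerN2.
  apply: (comparison_nonpos (f := fun y => - f y)
    (P := fun y => - Q y) (Q := fun y => - P y)) => //.
  + by move=> y Ny nIy; rewrite PQ_off.
  + by move=> z Iz; rewrite stepN -Q_fix.
  + by move=> z Iz; rewrite stepN -P_fix.
  + by left => z Iz; rewrite oppr_lt0 f_gt0.
- exact: (comparison_nonpos PQ_off P_fix Q_fix (or_intror f0M1)).
Qed.

Lemma nodal_solution_unique f g P Q : rhs_sign f ->
  nodal_solution f g P -> nodal_solution f g Q -> forall x, nodes M x -> P x = Q x.
Proof.
move=> rhs sP sQ x Nx; apply/eqP.
by rewrite eq_le (nodal_solution_le rhs sP sQ) ?(nodal_solution_le rhs sQ sP).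
Qed.

Definition jacobi f g w x : R := if pselect (I x) then step f w x else g x.

Lemma jacobi_in f g w z : I z -> jacobi f g w z = step f w z.
Proof. by rewrite /jacobi; case: pselect. Qed.

Lemma jacobi_out f g w x : ~ I x -> jacobi f g w x = g x.
Proof. by rewrite /jacobi; case: pselect. Qed.

Lemma jacobi_le f g w w' : (forall y, nodes M y -> w y <= w' y) ->
  forall x, nodes M x -> jacobi f g w x <= jacobi f g w' x.
Proof.
move=> le_ww' x Nx; have [Ix|nIx] := pselect (I x); last by rewrite !jacobi_out.
by rewrite !jacobi_in //; exact: step_le.
Qed.

Lemma jacobi_trajectory_le f g (v u : nat -> pt -> R) :
  (forall k x, nodes M x -> v k.+1 x = jacobi f g (v k) x) ->
  (forall k x, nodes M x -> u k.+1 x = jacobi f g (u k) x) ->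
  (forall x, nodes M x -> v 0%N x <= u 0%N x) ->
  forall k x, nodes M x -> v k x <= u k x.
Proof.
by move=> v_rec u_rec le0; elim=> // k IH x Nx; rewrite v_rec // u_rec //; exact: jacobi_le.
Qed.

Lemma iter_jacobi_nondecreasing f g w : (forall x, nodes M x -> w x <= jacobi f g w x) ->
  forall x, nodes M x -> nondecreasing_seq (fun k => iter k (jacobi f g) w x).
Proof.
move=> sub x Nx; apply/nondecreasing_seqP => k.
by apply: (jacobi_trajectory_le (v := fun k => iter k _ w) (u := fun k => iter k.+1 _ w)).
Qed.

Lemma iter_jacobi_nonincreasing f g w : (forall x, nodes M x -> jacobi f g w x <= w x) ->
  forall x, nodes M x -> nonincreasing_seq (fun k => iter k (jacobi f g) w x).
Proof.
move=> super x Nx; apply/nonincreasing_seqP => k.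
by apply: (jacobi_trajectory_le (v := fun k => iter k.+1 _ w) (u := fun k => iter k _ w)).
Qed.

Lemma jacobi_limit f g (s : nat -> pt -> R) :
  (forall k x, nodes M x -> s k.+1 x = jacobi f g (s k) x) ->
  (forall x, nodes M x -> cvgn (s^~ x)) -> nodal_solution f g (fun x => limn (s^~ x)).
Proof.
move=> s_rec s_cvg.
have cvgS x : nodes M x -> jacobi f g (s k) x @[k --> \oo] --> limn (s^~ x).
  move=> Nx; have := s_cvg x Nx; rewrite -(cvg_shiftS (s^~ x)).
  by under eq_cvg do rewrite /= s_rec //.
split=> [z Iz|x Nx nIx].
  apply: (cvg_unique (@Rhausdorff R) (cvgS z (I_nodes Iz))) => /=.
  by under eq_cvg do rewrite jacobi_in //; exact: cvg_step.
apply: (cvg_unique (@Rhausdorff R) (cvgS x Nx)) => /=.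
by under eq_cvg do rewrite jacobi_out //; exact: cvg_cst.
Qed.

(* the iterates are trapped between the monotone iterates of a sub- and a
   supersolution, whose limits coincide by uniqueness *)
Lemma jacobi_iterates_cvg f g (u : nat -> pt -> R) w0 W0 : rhs_sign f ->
  (forall x, nodes M x -> w0 x <= jacobi f g w0 x) ->
  (forall x, nodes M x -> jacobi f g W0 x <= W0 x) ->
  (forall x, nodes M x -> w0 x <= u 0%N x <= W0 x) ->
  (forall k x, nodes M x -> u k.+1 x = jacobi f g (u k) x) ->
  exists2 L, nodal_solution f g L & forall x, nodes M x -> u k x @[k --> \oo] --> L x.
Proof.
move=> rhs sub super u0 u_rec.
pose lo k := iter k (jacobi f g) w0; pose hi k := iter k (jacobi f g) W0.
have lo_rec k x : nodes M x -> lo k.+1 x = jacobi f g (lo k) x by [].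
have hi_rec k x : nodes M x -> hi k.+1 x = jacobi f g (hi k) x by [].
have lo_u := jacobi_trajectory_le lo_rec u_rec (fun x Nx => (andP (u0 x Nx)).1).
have u_hi := jacobi_trajectory_le u_rec hi_rec (fun x Nx => (andP (u0 x Nx)).2).
have lo_nd := iter_jacobi_nondecreasing sub; have hi_ni := iter_jacobi_nonincreasing super.
have lo_hi k x : nodes M x -> lo k x <= hi k x.
  by move=> Nx; rewrite (le_trans (lo_u _ _ Nx)) ?u_hi.
have lo_cvg x : nodes M x -> cvgn (lo^~ x).
  move=> Nx; apply: nondecreasing_is_cvgn (lo_nd x Nx) _.
  by exists (W0 x) => _ [k _ <-]; rewrite (le_trans (lo_hi k x Nx)) // (hi_ni x Nx 0%N k).
have hi_cvg x : nodes M x -> cvgn (hi^~ x).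
  move=> Nx; apply: nonincreasing_is_cvgn (hi_ni x Nx) _.
  by exists (w0 x) => _ [k _ <-]; rewrite (le_trans _ (lo_hi k x Nx)) // (lo_nd x Nx 0%N k).
have sol_lo := jacobi_limit lo_rec lo_cvg; have sol_hi := jacobi_limit hi_rec hi_cvg.
exists (fun x => limn (lo^~ x)) => // x Nx.
apply: (squeeze_cvgr (f := lo^~ x) (h := hi^~ x)).
- by apply: nearW => k; rewrite lo_u ?u_hi.
- exact: lo_cvg.
- by rewrite (nodal_solution_unique rhs sol_lo sol_hi) //; exact: hi_cvg.
Qed.

Lemma jacobiN f g w x :
  jacobi f g (fun y => - w y) x = - jacobi (fun y => - f y) (fun y => - g y) w x.
Proof.
have [Ix|nIx] := pselect (I x); last by rewrite !jacobi_out ?opprK.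
by rewrite !jacobi_in // /step stencil_maxN stencil_minN; ring.
Qed.

Lemma nodes_lbound (F : pt -> R) : exists a, forall x, nodes M x -> a <= F x.
Proof.
exists (\big[Num.min/0]_(y <- node_seq M) F y) => x /(node_seqP M x) Nx.
exact: (ge_bigmin_seq _ x xpredT).
Qed.

Section Barrier.
Hypothesis St_unit : forall v, v \in St -> enorm v = 1.
Hypothesis St_sym : forall v, v \in St -> - v \in St.
Hypothesis St_neq0 : St != [::].
Variables a K : R.
Hypothesis K_ge0 : 0 <= K.
Let q (x : pt) := a + K * sqnorm x.

Lemma quadratic_interp_pair_ge z v : I z -> v \in St ->
  2 * q z + 2 * K * eps ^+ 2 <= interp M q (z + eps *: v) + interp M q (z + eps *: - v).
Proof.
move=> Iz vS; have sq1 : sqnorm v = 1 by rewrite -sqr_enorm St_unit // expr1n.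
have := interp_sqnorm_ge a K_ge0 (stencil_mesh Iz vS).
have := interp_sqnorm_ge a K_ge0 (stencil_mesh Iz (St_sym vS)).
rewrite !sqnormD !sqnormZ sqnormN sq1 !dotpZr dotpNr /q; lra.
Qed.

Lemma quadratic_stencil_ge z : I z ->
  2 * q z + K * eps ^+ 2 <= stencil_max q z + stencil_min q z.
Proof.
move=> Iz; have [v0 v0S] : exists v0, v0 \in St.
  by case: St St_neq0 => // v0 ? _; exists v0; rewrite mem_head.
have := quadratic_interp_pair_ge Iz v0S.
have := le_stencil_max q z v0S; have := le_stencil_max q z (St_sym v0S).
have := @mulr_ge0 _ K (eps ^+ 2) K_ge0 (sqr_ge0 eps).
case: (big_seq_attained (q z) St (fun v => interp M q (z + eps *: v)) min_sel).
  by move=> smin_z; have : stencil_min q z = q z := smin_z; lra.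
move=> [v vS smin_v]; have : stencil_min q z = interp M q (z + eps *: v) := smin_v.
have := quadratic_interp_pair_ge Iz vS; have := le_stencil_max q z (St_sym vS); lra.
Qed.

Lemma quadratic_subsolution f g : (forall z, I z -> - K <= f z) ->
  (forall x, nodes M x -> ~ I x -> q x <= g x) ->
  forall x, nodes M x -> q x <= jacobi f g q x.
Proof.
move=> f_ge g_ge x Nx; have [Ix|nIx] := pselect (I x); last by rewrite jacobi_out // g_ge.
rewrite jacobi_in // /step; have := quadratic_stencil_ge Ix.
have : 0 <= eps ^+ 2 * (f x + K) by rewrite mulr_ge0 ?sqr_ge0 // -lerBlDr sub0r f_ge.
lra.
Qed.

End Barrier.

Lemma exists_barrier f g (u0 : pt -> R) C :
  (forall v, v \in St -> enorm v = 1) -> (forall v, v \in St -> - v \in St) -> St != [::] ->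
  (forall z, I z -> `|f z| <= C) ->
  exists w0, [/\ forall x, nodes M x -> w0 x <= jacobi f g w0 x,
     forall x, nodes M x -> jacobi f g (fun y => - w0 y) x <= - w0 x &
     forall x, nodes M x -> w0 x <= u0 x <= - w0 x].
Proof.
move=> St_unit St_sym St_neq0 f_le; set K := `|C|; have K_ge0 : 0 <= K := normr_ge0 C.
have fK z : I z -> - K <= f z <= K.
  by move=> Iz; rewrite -ler_norml (le_trans (f_le z Iz)) ?ler_norm.
have [a a_le] := nodes_lbound (fun x => - (K * sqnorm x + `|u0 x| + `|g x|)).
have q_le x : nodes M x -> a + K * sqnorm x <= - `|u0 x| - `|g x|.
  by move=> Nx; have := a_le x Nx; lra.
have absB (b : R) : - `|b| <= b <= `|b| by rewrite -ler_norml.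
exists (fun x => a + K * sqnorm x); split.
- apply: quadratic_subsolution => // [z /fK /andP[] //|x Nx _].
  by have := q_le x Nx; have := absB (u0 x); have := absB (g x); lra.
- move=> x Nx; rewrite jacobiN lerN2.
  apply: quadratic_subsolution => // [z /fK /andP[_]|y Ny _]; first by rewrite lerN2.
  by have := q_le y Ny; have := absB (u0 y); have := absB (g y); lra.
- by move=> x Nx; have := q_le x Nx; have := absB (u0 x); have := normr_ge0 (g x); lra.
Qed.

End Scheme.

Section DiscreteProblem.
Context {R : realType} {n : nat}.
Local Notation pt := 'rV[R]_(n.+1).

Lemma meshsize_gt0 (M : seq (@simplex R n)) h : conforming_mesh M -> meshsize M h -> 0 < h.
Proof.
move=> cM [h_ge [T TM _]]; apply: lt_le_trans (h_ge T TM ord0 (lift ord0 ord0)).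
rewrite lt0r enorm_ge0 andbT; apply/eqP => /enorm_eq0/eqP; rewrite subr_eq0.
by move=> /eqP/(aff_indep_inj (cM.1 T TM))/eqP; rewrite (negbTE (neq_lift _ _)).
Qed.

Lemma Stheta_neq_nil (St : seq pt) theta : is_Stheta St theta -> St != [::].
Proof.
case=> _ _ cover; pose e : pt := \row_k (k == ord0)%:R.
have e1 : enorm e = 1.
  rewrite /enorm (bigD1 ord0) //= mxE eqxx expr1n big1 ?addr0 ?sqrtr1 // => i /negbTE ni.
  by rewrite mxE ni expr0n.
by apply/eqP => St0; have [w] := cover e e1; rewrite St0.
Qed.

Variables (Om : set pt) (M : seq (@simplex R n)) (St : seq pt) (eps : R).
Hypothesis cM : conforming_mesh M.
Hypothesis eps_neq0 : eps != 0.
Local Notation I := (nodes_I Om M eps).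
Hypothesis stencil_mesh : forall z v, I z -> v \in St -> mesh_union M (z + eps *: v).

Let I_nodes : I `<=` nodes M. Proof. by move=> z []. Qed.

Lemma rhs_sign_nodes_I f : (exists C, forall x, Om x -> `|f x| <= C) ->
  ((sup [set f x | x in Om] < 0 \/ inf [set f x | x in Om] > 0) \/
   (forall x, Om x -> f x = 0)) ->
  ((forall x, Om x -> f x = 0) -> condM1 Om M St eps) ->
  rhs_sign M St eps I f.
Proof.
move=> [C f_le] rhs2 M1; have Om_I z : I z -> Om z by case=> _ [].
have f_ub : has_ubound [set f x | x in Om].
  by exists C => _ [x Omx <-]; rewrite (le_trans (ler_norm _)) ?f_le.
have f_lb : has_lbound [set f x | x in Om].
  by exists (- C) => _ [x Omx <-]; rewrite lerNl (le_trans _ (f_le x Omx)) // -normrN ler_norm.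
case: rhs2 => [[sup_lt0|inf_gt0]|f0].
- apply: Or31 => z Iz; rewrite (le_lt_trans _ sup_lt0) // ub_le_sup //.
  by exists z => //; exact: Om_I.
- apply: Or32 => z Iz; rewrite (lt_le_trans inf_gt0) // ge_inf //.
  by exists z => //; exact: Om_I.
- by apply: Or33; split; [move=> z /Om_I; exact: f0 | exact: M1].
Qed.

Lemma maxN_stencil_max w z : inVh M w -> I z -> maxN St eps w z = stencil_max M St eps w z.
Proof. by move=> wV Iz; apply: eq_big_seq => v vS; rewrite interp_Vh //; apply: stencil_mesh. Qed.

Lemma minN_stencil_min w z : inVh M w -> I z -> minN St eps w z = stencil_min M St eps w z.
Proof. by move=> wV Iz; apply: eq_big_seq => v vS; rewrite interp_Vh //; apply: stencil_mesh. Qed.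

Lemma disc_inf_lap_stepE f w z : inVh M w -> I z ->
  disc_inf_lap St eps w z = f z <-> w z = step M St eps f w z.
Proof.
move=> wV Iz; rewrite /disc_inf_lap /step maxN_stencil_max // minN_stencil_min //.
have e2 : eps ^+ 2 != 0 by rewrite expf_neq0.
split=> [<-|->]; last by field.
by rewrite mulrA mulfV // mul1r; field.
Qed.

Lemma nodal_solution_of_solves f g U :
  solves_discrete Om M St eps f g U -> nodal_solution M St eps I f g U.
Proof.
case=> UV Ueq Ub; split=> [z Iz|x Nx nIx]; first exact: (disc_inf_lap_stepE f UV Iz).1 (Ueq z Iz).
by apply: Ub; split.
Qed.

Lemma solves_interp f g L :
  nodal_solution M St eps I f g L -> solves_discrete Om M St eps f g (interp M L).
Proof.
case=> L_fix L_off; split=> [|z Iz|x [Nx nIx]]; first exact: interp_inVh.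
  apply/(disc_inf_lap_stepE f (interp_inVh cM L) Iz).
  rewrite interp_node ?L_fix //; last exact: I_nodes.
  by apply: (step_ext I_nodes stencil_mesh) => // y; rewrite inE => Ny; rewrite interp_node.
by rewrite interp_node ?L_off.
Qed.

Lemma jacobi_iteration f g (u : nat -> pt -> R) : (forall k, inVh M (u k)) ->
  (forall k z, I z ->
     u k.+1 z = 2^-1 * (eps ^+ 2 * f z + maxN St eps (u k) z + minN St eps (u k) z)) ->
  (forall k z, nodes_b Om M eps z -> u k.+1 z = g z) ->
  forall k x, nodes M x -> u k.+1 x = jacobi M St eps I f g (u k) x.
Proof.
move=> uV uI ub k x Nx; have [Ix|nIx] := pselect (I x); last by rewrite jacobi_out ?ub.
by rewrite jacobi_in // uI // maxN_stencil_max // minN_stencil_min.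
Qed.

Lemma cvg_on_mesh (u : nat -> pt -> R) L U : (forall k, inVh M (u k)) -> inVh M U ->
  {in nodes M, U =1 L} -> (forall x, nodes M x -> u k x @[k --> \oo] --> L x) ->
  forall x, mesh_union M x -> u k x @[k --> \oo] --> U x.
Proof.
move=> uV UV UL cvg_u x mx; under eq_cvg do rewrite -(interp_Vh (uV _) mx).
by rewrite -(interp_Vh UV mx) (interp_ext mx UL); exact: cvg_interp.
Qed.

End DiscreteProblem.

Theorem theorem6p1 (R : realType) (n : nat)
  (Om : set 'rV[R]_(n.+1))
  (M : seq (@simplex R n)) (h eps theta : R) (St : seq 'rV[R]_(n.+1))
  (f g : 'rV[R]_(n.+1) -> R) (gt : R -> 'rV[R]_(n.+1) -> R)
  (u : nat -> 'rV[R]_(n.+1) -> R) :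
  (* setting *)
  bounded_domain_cont_bdry Om ->
  conforming_mesh M ->
  meshsize M h ->
  inner Om h `<=` Omega_h M -> Omega_h M `<=` Om ->
  h <= eps -> eps <= diam Om ->
  0 < theta -> theta <= 1 ->
  is_Stheta St theta ->
  (* (RHS.1) *)
  {within Om, continuous f} ->
  (exists C : R, forall x, Om x -> `|f x| <= C) ->
  (* (RHS.2) *)
  ((sup [set f x | x in Om] < 0 \/ inf [set f x | x in Om] > 0) \/
   (forall x, Om x -> f x = 0)) ->
  (* (BC.1) *)
  {within bdry Om, continuous g} ->
  (* (BC.2) *)
  (forall e : R, 0 < e -> {within closure Om, continuous (gt e)}) ->
  (forall alpha : R, 0 <= alpha <= 1 -> holder alpha (bdry Om) g ->
     (forall e : R, 0 < e -> holder alpha (closure Om) (gt e)) /\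
     exists C : R, forall e : R, 0 < e ->
       forall x, bdry Om x -> `|g x - gt e x| <= C * e `^ alpha) ->
  (* (M.1) in case (RHS.2b) *)
  ((forall x, Om x -> f x = 0) -> condM1 Om M St eps) ->
  (* the iteration *)
  (forall k, inVh M (u k)) ->
  (forall z, nodes_b Om M eps z -> u 0%N z = gt eps z) ->
  (forall k z, nodes_I Om M eps z ->
     u k.+1 z = 2^-1 * (eps ^+ 2 * f z + maxN St eps (u k) z + minN St eps (u k) z)) ->
  (forall k z, nodes_b Om M eps z -> u k.+1 z = gt eps z) ->
  (* conclusion: the discrete solution exists, and the iterates converge to it *)
  (exists U, solves_discrete Om M St eps f (gt eps) U) /\
  (forall U, solves_discrete Om M St eps f (gt eps) U ->
     forall x, mesh_union M x -> u k x @[k --> \oo] --> U x).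
Proof.
(* continuity, the boundary regularity, [eps <= diam Om], the resolution [theta] and the
   boundary values of [u 0] play no role in the convergence of the iteration *)
move=> [oOm _ _ _ _] cM hM sub_h _ heps _ _ _ StS _ f_bd rhs2 _ _ _ M1 uV _ uI ub.
have [St_unit St_sym _] := StS.
have h_gt0 := meshsize_gt0 cM hM.
have eps_neq0 : eps != 0 by rewrite gt_eqF // (lt_le_trans h_gt0 heps).
have I_nodes : nodes_I Om M eps `<=` nodes M by move=> z [].
have stencil_mesh z v : nodes_I Om M eps z -> v \in St -> mesh_union M (z + eps *: v).
  by case=> _ Iz vS; exact: stencil_in_mesh oOm sub_h (ltW h_gt0) heps Iz (St_unit v vS).
have rhs := rhs_sign_nodes_I f_bd rhs2 M1.
have [C f_le] : exists C, forall z, nodes_I Om M eps z -> `|f z| <= C.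
  by case: f_bd => C f_le; exists C => z [_ [Omz _]]; exact: f_le.
have [w0 [sub super u0_bd]] := exists_barrier stencil_mesh (gt eps) (u 0%N) St_unit St_sym
  (Stheta_neq_nil StS) f_le.
have [L solL cvgL] := jacobi_iterates_cvg cM I_nodes stencil_mesh eps_neq0 rhs sub super u0_bd
  (jacobi_iteration stencil_mesh uV uI ub).
split=> [|U solU]; first by exists (interp M L); exact: solves_interp.
apply: cvg_on_mesh cvgL => //; first by case: solU.
move=> x; rewrite inE => Nx.
by apply: (nodal_solution_unique cM I_nodes stencil_mesh eps_neq0 rhs _ solL) => //;
  exact: nodal_solution_of_solves solU.
Qed.
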